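(* Let $n\ge1$, $k_1,k_2,\ell_2\ge0$ and $\ell_1\ge-1$ be integers with $k_1+k_2=\ell_1+\ell_2=d$ and $k_2<\ell_2$, and suppose that the pairs $(n+d+2,k_1)$, $(n+k_2+1,k_2)$, $(n+d+2,\ell_1)$, $(n+\ell_2+1,\ell_2)$ are valid. Then, regarding both sides as polynomials in $q$, the leading term of $$u(f^*(\cdot,q),n+d+2,q,k_1,k_2)-u(f^*(\cdot,q),n+d+2,q,\ell_1,\ell_2)$$ is $q^{2k_1+k_2}$; in particular $u(f^*(\cdot,q),n+d+2,q,k_1,k_2)>u(f^*(\cdot,q),n+d+2,q,\ell_1,\ell_2)$ for all sufficiently large $q$.
   Context: A pair of integers $(m,k)$ is valid if $-1\le k\le\frac{m-1}{2}$. For a function $\phi$ on integers $\ge-1$ with $\phi(-1)=0$, $m\ge1$ and valid $(m,k)$, let $u(\phi,m,q,k)=q^{2k+2}\phi(m-k-1)+\phi(k)+\bigl(\sum_{i=0}^kq^i\bigr)\bigl(\sum_{j=k}^{m-2}q^j\bigr)$ (empty sums are $0$), and for integers $k_1,k_2$ with $(m,k_1)$ and $(m-k_1-1,k_2)$ valid let $u(\phi,m,q,k_1,k_2)=q^{2k_1+2}u(\phi,m-k_1-1,q,k_2)+\phi(k_1)+\bigl(\sum_{i=0}^{k_1}q^i\bigr)\bigl(\sum_{j=k_1}^{m-2}q^j\bigr)$. Let $k^*(m)=m-2^{\lfloor\log_2 m\rfloor}$. The polynomials $f^*(m,q)$ are defined by $f^*(-1,q)=f^*(0,q)=f^*(1,q)=0$,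 $f^*(2,q)=1$, $f^*(3,q)=q^2+1$, $f^*(4,q)=q^4+2q^2+q+1$ and $f^*(m,q)=u(f^*(\cdot,q),m,q,k^*(m))$ for $m\ge5$. *)

From HB Require Import structures.
From mathcomp Require Import all_boot all_order all_algebra.
Set Implicit Arguments. Unset Strict Implicit. Unset Printing Implicit Defensive.
Import Order.TTheory GRing.Theory Num.Theory.
Local Open Scope ring_scope.

(* (m,k) is valid iff -1 <= k <= (m-1)/2, i.e. 2k <= m-1 *)
Definition valid (m k : int) : bool := (-1 <= k) && (k *+ 2 <= m - 1).

Definition geom (a b : nat) : {poly int} := \sum_(a <= j < b) 'X^j.

(* u(phi,m,q,k) = q^{2k+2} phi(m-k-1) + phi(k)
                  + (sum_{i=0}^k q^i)(sum_{j=k}^{m-2} q^j).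
   For k = -1 the first sum is empty, so the product is 0. *)
Definition u1 (phi : int -> {poly int}) (m k : int) : {poly int} :=
  'X^(absz (k *+ 2 + 2)) * phi (m - k - 1) + phi k
  + geom 0 (absz (k + 1)) * geom (absz k) (absz (m - 1)).

Definition u2 (phi : int -> {poly int}) (m k1 k2 : int) : {poly int} :=
  'X^(absz (k1 *+ 2 + 2)) * u1 phi (m - k1 - 1) k2 + phi k1
  + geom 0 (absz (k1 + 1)) * geom (absz k1) (absz (m - 1)).

Definition kstar (m : nat) : nat := (m - 2 ^ trunc_log 2 m)%N.

(* fuel-based well-founded recursion; fuel = m is sufficient since all
   recursive calls are on arguments < m. *)
Fixpoint fstar_aux (fuel m : nat) {struct fuel} : {poly int} :=
  match fuel with
  | 0%N => 0
  | fuel'.+1 =>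
    match m with
    | 0%N | 1%N => 0
    | 2%N => 1
    | 3%N => 'X^2 + 1
    | 4%N => 'X^4 + 'X^2 *+ 2 + 'X + 1
    | _ => u1 (fun x : int => match x with
                              | Posz j => fstar_aux fuel' j
                              | Negz _ => 0 end)
              (Posz m) (Posz (kstar m))
    end
  end.

(* f*(m,q) for m >= -1 (value 0 on negative arguments, in particular f*(-1)=0) *)
Definition fstar (m : int) : {poly int} :=
  match m with
  | Posz j => fstar_aux j.+1 j
  | Negz _ => 0
  end.

(* Write k1 = b + c, k2 = s, l1 = b - 1 and l2 = s + c + 1.  Both values of u have the shape
   q^(2b') (q^(2t+2) f*(n) + f*(t) + G) + f*(b'-1) + G' with products G, G' of geometric sums,
   and the f*(n) terms cancel in the difference.  The remaining f* terms combine into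
   q^(2b) (q^(2c+2) f*(s) - f*(s+c+1)) + f*(b+c) - f*(b-1), which has degree < 2k1 + k2
   because deg (q^2 f*(m) - f*(m+1)) < m for every m.  After multiplication by (q-1)^2 the
   geometric products become differences of monomials, which telescope to q^(2k1+k2+2) plus
   terms of lower degree. *)

From HB Require Import structures.
From mathcomp Require Import all_boot all_order all_algebra polyrcf.
From mathcomp Require Import zify ring.
Import Order.TTheory GRing.Theory Num.Theory.
Set Implicit Arguments. Unset Strict Implicit. Unset Printing Implicit Defensive.
Local Open Scope ring_scope.

Lemma size_polyD_leq (R : nzSemiRingType) (p q : {poly R}) n :
  (size p <= n)%N -> (size q <= n)%N -> (size (p + q)%R <= n)%N.
Proof. by move=> sp sq; rewrite (leq_trans (size_polyD _ _)) // geq_max sp sq. Qed.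

Lemma poly_int_eventually_gt0 (p : {poly int}) :
  0 < lead_coef p -> exists Q : int, forall x : int, Q <= x -> 0 < p.[x].
Proof.
move=> lc_gt0; have lcQ_gt0 : 0 < lead_coef (map_poly (intr : int -> rat) p).
  by rewrite lead_coef_map_inj ?ltr0z //; exact: intr_inj.
have [r Hr] := poly_pinfty_gt_lc lcQ_gt0.
exists (Num.ceil r) => x; rewrite ceil_le_int => /Hr.
rewrite horner_map lead_coef_map_inj //=; last exact: intr_inj.
by rewrite ler_int; apply: lt_le_trans.
Qed.

Lemma size_lead_coef_monicM_cofactor (R : nzRingType) (p q r : {poly R}) N k :
  p \is monic -> size p = k.+1 -> p * q = 'X^(N + k) + r -> (size r <= N + k)%N ->
  size q = N.+1 /\ lead_coef q = 1.
Proof.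
move=> mon_p size_p pq_eq size_r.
have size_pq : size (p * q) = (N + k).+1 by rewrite pq_eq size_polyDl ?size_polyXn.
have lc_pq : lead_coef (p * q) = 1 by rewrite pq_eq lead_coefDl ?lead_coefXn ?size_polyXn.
have q_neq0 : q != 0 by apply: contra_eq_neq size_pq => ->; rewrite mulr0 size_poly0.
split; last by rewrite -(lead_coef_monicM _ mon_p).
by move: size_pq; rewrite size_monicM // size_p; lia.
Qed.

Lemma geom_geq a b : (b <= a)%N -> geom a b = 0.
Proof. by move=> ba; rewrite /geom big_geq. Qed.

Lemma geomSS a b : geom a.+1 b.+1 = 'X * geom a b.
Proof. by rewrite /geom big_add1 mulr_sumr; apply: eq_bigr => i _; rewrite exprS. Qed.

Lemma geom0S b : geom 0 b.+1 = 1 + 'X * geom 0 b.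
Proof. by rewrite /geom big_nat_recl // expr0 -geomSS /geom big_add1. Qed.

Lemma mul_subX1_geom a b : (a <= b)%N -> ('X - 1) * geom a b = 'X^b - 'X^a.
Proof.
move=> ab; rewrite /geom mulr_sumr -telescope_sumr //.
by apply: eq_bigr => i _; rewrite exprS; ring.
Qed.

Lemma mul_subX1_geom0 b : ('X - 1) * geom 0 b = 'X^b - 1.
Proof. by rewrite mul_subX1_geom ?expr0. Qed.

Lemma size_geom a b : (size (geom a b) <= b)%N.
Proof.
rewrite /geom big_seq; apply: (big_ind (fun p : {poly int} => size p <= b)%N).
- by rewrite size_poly0.
- by move=> p q; apply: size_polyD_leq.
- by move=> i; rewrite mem_index_iota size_polyXn => /andP[].
Qed.

Lemma kstar_lt m : (0 < m)%N -> (kstar m < m)%N.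
Proof. by move=> m_gt0; rewrite /kstar; have := expn_gt0 2 (trunc_log 2 m); lia. Qed.

Lemma kstarS m : (0 < m)%N -> (0 < kstar m.+1)%N -> kstar m.+1 = (kstar m).+1.
Proof.
rewrite /kstar => m_gt0; set t := trunc_log 2 m.+1 => kS_gt0.
have t_le := trunc_logP (isT : (1 < 2)%N) (isT : (0 < m.+1)%N).
have t_gt := trunc_log_ltn m.+1 (isT : (1 < 2)%N).
suff -> : trunc_log 2 m = t by rewrite -/t in t_le t_gt *; lia.
by apply: trunc_log_eq => //; apply/andP; split; rewrite -/t in t_le t_gt *; lia.
Qed.

Lemma fstar_aux_fuel f1 f2 j :
  (j < f1)%N -> (j < f2)%N -> fstar_aux f1 j = fstar_aux f2 j.
Proof.
elim: f1 f2 j => [|f1 IH] [|f2] // [|[|[|[|[|j]]]]] //= j_lt1 j_lt2.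
set m := j.+4.+1; have k_lt : (kstar m < m)%N by apply: kstar_lt.
rewrite /u1; congr (_ * _ + _ + _); last by apply: IH; lia.
by case E: (_ - _ - _) => [i|i] //; apply: IH; move: E; lia.
Qed.

Section NatArguments.
Variable phi : int -> {poly int}.

Lemma u1_nat n t :
  u1 phi (n + t + 1)%N t
  = 'X^(t.*2.+2) * phi n + phi t + geom 0 t.+1 * geom t (n + t).
Proof.
rewrite /u1; have -> : (n + t + 1)%N%:Z - t%:Z - 1 = n by lia.
have -> : (n + t + 1)%N%:Z - 1 = (n + t)%N by lia.
have -> : t%:Z *+ 2 + 2 = t.*2.+2 by rewrite mulr2n; lia.
by have -> : t%:Z + 1 = t.+1 by lia.
Qed.

Lemma u2_nat n b t :
  u2 phi (n + b + t + 1)%N (b%:Z - 1) t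
  = 'X^(b.*2) * u1 phi (n + t + 1)%N t + phi (b%:Z - 1) + geom 0 b * geom b.-1 (n + b + t).
Proof.
rewrite /u2; have -> : (n + b + t + 1)%N%:Z - (b%:Z - 1) - 1 = (n + t + 1)%N by lia.
have -> : (n + b + t + 1)%N%:Z - 1 = (n + b + t)%N by lia.
have -> : (b%:Z - 1) *+ 2 + 2 = b.*2 by rewrite mulr2n; lia.
have -> : b%:Z - 1 + 1 = b by lia.
case: b => [|b]; first by rewrite geom_geq // !mul0r.
by have -> : b.+1%:Z - 1 = b by lia.
Qed.

End NatArguments.

Lemma fstar_auxS f m : (4 < m)%N ->
  fstar_aux f.+1 m = u1 (fun x => if x is Posz i then fstar_aux f i else 0) m (kstar m).
Proof. by case: m => [|[|[|[|[|m]]]]]. Qed.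

Lemma fstar_u1 m : (5 <= m)%N -> fstar m = u1 fstar m (kstar m).
Proof.
move=> m_ge5; have k_lt : (kstar m < m)%N by apply: kstar_lt; lia.
rewrite {1}/fstar fstar_auxS // /u1; congr (_ * _ + _ + _); last exact: fstar_aux_fuel.
by case E: (_ - _ - _) => [i|i] //; apply: fstar_aux_fuel; move: E; lia.
Qed.

Lemma fstar_rec m k : (5 <= m)%N -> kstar m = k ->
  fstar m = 'X^(k.*2.+2) * fstar (m - k.+1)%N + fstar k + geom 0 k.+1 * geom k m.-1.
Proof.
move=> m_ge5 km; have k_lt : (k < m)%N by rewrite -km; apply: kstar_lt; lia.
have m_eq : m = (m - k.+1 + k + 1)%N by lia.
by rewrite fstar_u1 // km [in u1 _ m _]m_eq u1_nat (_ : (m - k.+1 + k = m.-1)%N) //; lia.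
Qed.

Lemma fstar_predn b : fstar (b%:Z - 1) = fstar b.-1.
Proof. by case: b => [|b] //; rewrite (_ : b.+1%:Z - 1 = b) //; lia. Qed.

Lemma size_fstarS_sub (m : nat) : (size ('X^2 * fstar m - fstar m.+1)%R <= m)%N.
Proof.
(* When m + 1 is a power of 2 the recursion gives f*(m+1) = q^2 f*(m) + (1 + ... + q^(m-1));
   otherwise k*(m+1) = k*(m) + 1 and the two recursions differ by the instance at k*(m). *)
elim/ltn_ind: m => m IH.
have size_Ngeom a b n : (b <= n)%N -> (size (- geom a b)%R <= n)%N.
  by move=> bn; rewrite size_polyN (leq_trans (size_geom _ _)).
have geom03 : geom 0 3 = 1 + 'X + 'X^2.
  by rewrite !geom0S geom_geq //; ring.
case: m IH => [|[|[|[|[|m]]]]] IH.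
- by rewrite mulr0 subrr size_poly0.
- by rewrite (_ : _ - _ = - geom 0 1) ?size_Ngeom // geom0S geom_geq //; ring.
- by rewrite (_ : _ - _ = - geom 0 1) ?size_Ngeom // geom0S geom_geq //=; ring.
- by rewrite (_ : _ - _ = - geom 0 3) ?size_Ngeom // geom03 /=; ring.
- rewrite (_ : _ - _ = - geom 1 4) ?size_Ngeom //.
  rewrite (@fstar_rec 5 1) // geomSS geom03 (geom0S 1) geom0S geom_geq //=.
  ring.
set n := m.+4.+1; have n_ge5 : (5 <= n)%N by [].
have [k0|k_gt0] := posnP (kstar n.+1).
  rewrite (_ : _ - _ = - geom 0 n) ?size_Ngeom //.
  by rewrite (fstar_rec _ k0) //= (geom0S 0) geom_geq //; ring.
have k_lt : (kstar n < n)%N by apply: kstar_lt.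
rewrite (fstar_rec _ (kstarS _ k_gt0)) // (fstar_rec n_ge5 (erefl (kstar n))) //.
set k := kstar n in k_lt *; rewrite subSS (geom0S k.+1) (_ : n.+1.-1 = n.-1.+1) // geomSS.
rewrite (_ : _ - _ = ('X^2 * fstar k - fstar k.+1) - 'X * geom k n.-1); last first.
  by rewrite doubleS !exprS; ring.
apply: size_polyD_leq; first exact: leq_trans (IH k k_lt) (ltnW k_lt).
rewrite size_polyN (leq_trans (size_polyMleq _ _)) // size_polyX.
by have := size_geom k n.-1; rewrite (_ : 2%R = 2%N) //; lia.
Qed.

Lemma size_fstar_shift_sub (s j : nat) :
  (size ('X^(j.+1.*2) * fstar s - fstar (s + j.+1)%N)%R <= s + j.*2)%N.
Proof.
elim: j => [|j IH]; first by rewrite addn1 addn0; exact: size_fstarS_sub.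
rewrite (_ : _ - _ = 'X^2 * ('X^(j.+1.*2) * fstar s - fstar (s + j.+1)%N)
                     + ('X^2 * fstar (s + j.+1)%N - fstar (s + j.+1).+1)); last first.
  by rewrite addnS doubleS !exprS; ring.
apply: size_polyD_leq; last by rewrite (leq_trans (size_fstarS_sub _)) //; lia.
by rewrite (leq_trans (size_polyMleq _ _)) // size_polyXn; move: IH; lia.
Qed.

Lemma size_fstar (j : nat) : (size (fstar j) <= j.*2)%N.
Proof.
case: j => [|j]; first by rewrite size_poly0.
have := size_fstar_shift_sub 0 j; rewrite mulr0 sub0r size_polyN add0n.
by move/leq_trans; apply; rewrite doubleS leqW.
Qed.

Lemma u2_fstar_closed (n b t : nat) :
  ('X - 1) ^+ 2 * u2 fstar (n + b + t + 1)%N (b%:Z - 1) t =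
  ('X - 1) ^+ 2 * ('X^(b.*2) * ('X^(t.*2.+2) * fstar n + fstar t) + fstar b.-1)
  + 'X^(b.*2) * ('X^(t.+1) - 1) * ('X^(n + t) - 'X^t)
  + ('X^b - 1) * ('X^(n + b + t) - 'X^(b.-1)).
Proof.
have le_pred : (b.-1 <= n + b + t)%N by lia.
rewrite u2_nat u1_nat fstar_predn -!mul_subX1_geom0.
rewrite -(mul_subX1_geom (leq_addl n t)) -(mul_subX1_geom le_pred).
ring.
Qed.

Lemma sub_u2_fstar_closed (n b c s : nat) :
  let m := (n + b + c + s + 2)%N in
  ('X - 1) ^+ 2 * (u2 fstar m (b + c)%N s - u2 fstar m (b%:Z - 1) (s + c.+1)%N)
  = 'X^((b + c).*2 + s + 2)
    + (('X - 1) ^+ 2 * ('X^(b.*2) * ('X^(c.+1.*2) * fstar s - fstar (s + c.+1)%N)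
                        + fstar (b + c)%N - fstar b.-1)
       - 'X^(b + c + b + s + 1) + 'X^(b + c) - 'X^((b + c).*2 + 1)
       + ('X^b - 1) * 'X^(b.-1)).
Proof.
move=> m; have := u2_fstar_closed n (b + c).+1 s.
have := u2_fstar_closed n b (s + c.+1).
rewrite (_ : (n + b + (s + c.+1) + 1)%N = m); last by rewrite /m; lia.
rewrite (_ : (n + (b + c).+1 + s + 1)%N = m); last by rewrite /m; lia.
rewrite (_ : (b + c).+1%:Z - 1 = (b + c)%N) ?succnK; last lia.
move=> eqB eqA; rewrite mulrBr eqA eqB -!addnn.
by rewrite !(addnS, addSn, addn0, exprS, exprD); ring.
Qed.

Lemma size_lead_coef_sub_u2_fstar (n b c s : nat) :
  let m := (n + b + c + s + 2)%N in
  let D := u2 fstar m (b + c)%N s - u2 fstar m (b%:Z - 1) (s + c.+1)%N in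
  size D = ((b + c).*2 + s).+1 /\ lead_coef D = 1.
Proof.
move=> m D; set N := ((b + c).*2 + s)%N.
set P := 'X^(b.*2) * ('X^(c.+1.*2) * fstar s - fstar (s + c.+1)%N)
         + fstar (b + c)%N - fstar b.-1.
have size_Xn i : (i <= N.+1)%N -> (size ('X^i : {poly int}) <= N + 2)%N.
  by rewrite size_polyXn addn2.
have size_P : (size P <= N)%N.
  apply: size_polyD_leq; first apply: size_polyD_leq.
  - rewrite (leq_trans (size_polyMleq _ _)) // size_polyXn.
    by have := size_fstar_shift_sub s c; rewrite /N; lia.
  - by rewrite (leq_trans (size_fstar _)) // /N; lia.
  - by rewrite size_polyN (leq_trans (size_fstar _)) // /N; lia.
have W_monic : ('X - 1) ^+ 2 \is @monic int by rewrite monic_exp // -polyC1 monicXsubC.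
have size_W : size (('X - 1) ^+ 2 : {poly int}) = 3%N by rewrite -polyC1 size_exp_XsubC.
apply: (size_lead_coef_monicM_cofactor W_monic size_W (sub_u2_fstar_closed n b c s)).
rewrite -/P -/N.
rewrite !(size_polyD_leq, size_polyN, size_Xn) //; try by rewrite /N; lia.
- by rewrite (leq_trans (size_polyMleq _ _)) // size_W add3n addn2.
have size_Xb1 : (size ('X^b - 1 : {poly int})%R <= b.+1)%N.
  by rewrite size_polyD_leq // ?size_polyN ?size_polyXn ?size_poly1.
rewrite (leq_trans (size_polyMleq _ _)) // size_polyXn addnS.
rewrite (leq_trans (leq_add size_Xb1 (leqnn b.-1))) //.
by rewrite /N; lia.
Qed.

Unset Implicit Arguments.

Theorem lemma3p42 (n k1 k2 l1 l2 d : int) :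
  1 <= n -> 0 <= k1 -> 0 <= k2 -> 0 <= l2 -> -1 <= l1 ->
  k1 + k2 = d -> l1 + l2 = d -> k2 < l2 ->
  valid (n + d + 2) k1 -> valid (n + k2 + 1) k2 ->
  valid (n + d + 2) l1 -> valid (n + l2 + 1) l2 ->
  let D := u2 fstar (n + d + 2) k1 k2 - u2 fstar (n + d + 2) l1 l2 in
  [/\ size D = (absz (k1 *+ 2 + k2)).+1,
      lead_coef D = 1
    & exists Q : int, forall q : int, Q <= q ->
        (u2 fstar (n + d + 2) l1 l2).[q] < (u2 fstar (n + d + 2) k1 k2).[q]].
Proof.
move=> n_ge1 k1_ge0 k2_ge0 l2_ge0 l1_ge d_k d_l k2_lt _ _ _ _; subst d.
have [m En] : exists m : nat, n = m by exists `|n|%N; lia.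
have [s Ek2] : exists s : nat, k2 = s by exists `|k2|%N; lia.
have [b El1] : exists b : nat, l1 = b%:Z - 1 by exists (absz (l1 + 1)%R); lia.
have [c El2] : exists c : nat, l2 = Posz (s + c.+1) by exists (absz (l2 - s%:Z - 1)%R); lia.
have Ek1 : k1 = Posz (b + c) by lia.
subst.
rewrite (_ : m%:Z + ((b + c)%N + s) + 2 = (m + b + c + s + 2)%N); last lia.
rewrite (_ : (b + c)%N%:Z *+ 2 + s = ((b + c).*2 + s)%N); last by rewrite mulr2n; lia.
move=> D; have [size_D lc_D] : size D = _ /\ lead_coef D = 1 := size_lead_coef_sub_u2_fstar m b c s.
have [Q D_gt0] : exists Q : int, forall q, Q <= q -> 0 < D.[q].
  by apply: poly_int_eventually_gt0; rewrite lc_D.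
split => //.
by exists Q => q /D_gt0; rewrite hornerD hornerN subr_gt0.
Qed.
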